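(* Let $L_s, L_t\ge 0$ be integers and let $\beta=M/N$ with $M,N$ positive integers, $\gcd(M,N)=1$. Consider the multiset of positions $\{Nn+Mk: 0\le n\le L_s,\ 0\le k\le L_t\}$ (these are the positions $\tfrac{2d}{\lambda_b}(n+\beta k)$ under the normalization $\tfrac{2d}{\lambda_b}=N$), and let $\zeta_0<\zeta_1<\cdots<\zeta_{R_r-1}$ be its distinct values. Let $\mathbf{P}\in\{0,1\}^{(L_s+1)(L_t+1)\times R_r}$ be the matrix whose row with index $k(L_s+1)+n$ (rows indexed from $0$) has a single $1$, located in the column $c$ with $\zeta_c = Nn+Mk$, and zeros elsewhere. Then $$\mathrm{rank}(\mathbf{P})=R_r=\begin{cases} N(L_s+1)+M(L_t+1)-MN, & M<L_s+1 \text{ and } N<L_t+1,\\ (L_s+1)(L_t+1), & M\ge L_s+1 \text{ or } N\ge L_t+1.\end{cases}$$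
   Context: The matrix $\mathbf{P}$ arises in an airborne co-pulsing frequency diverse array radar: the Kronecker product of the coarray time steering vector $[e^{\mathrm{j}2\pi\beta\bar f k}]_{k=0}^{L_t}$ and receive steering vector $[e^{\mathrm{j}2\pi\bar f n}]_{n=0}^{L_s}$ equals $\mathbf{P}\mathbf{v}_{Rb}(\bar f)$, where $\mathbf{v}_{Rb}$ collects the exponentials at the distinct positions. Here $\beta = 2\nu_p T/d$ (platform velocity $\nu_p$, pulse repetition interval $T$, element spacing $d$), and the theorem is stated under the assumption $2d/\lambda_b=N$ with $\lambda_b$ the reference wavelength. *)

From HB Require Import structures.
From mathcomp Require Import all_boot all_order all_algebra.
Set Implicit Arguments. Unset Strict Implicit. Unset Printing Implicit Defensive.
Import Order.TTheory GRing.Theory Num.Theory.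

(* The multiset of normalized positions N*n + M*k, listed with row index
   k*(Ls+1) + n  (k outer, n inner). *)
Definition positions (M N Ls Lt : nat) : seq nat :=
  [seq N * n + M * k | k <- iota 0 Lt.+1, n <- iota 0 Ls.+1].

Definition zetas (M N Ls Lt : nat) : seq nat :=
  sort leq (undup (positions M N Ls Lt)).

Definition Rr (M N Ls Lt : nat) : nat := size (zetas M N Ls Lt).

Definition Pmat (F : fieldType) (M N Ls Lt : nat)
  : 'M[F]_(Ls.+1 * Lt.+1, Rr M N Ls Lt) :=
  \matrix_(i < Ls.+1 * Lt.+1, c < Rr M N Ls Lt)
    (if nth 0%N (zetas M N Ls Lt) c == (N * (i %% Ls.+1) + M * (i %/ Ls.+1))%N then 1%R else 0%R).

From HB Require Import structures.
From mathcomp Require Import all_boot all_order all_algebra.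
From mathcomp Require Import zify.
Import GRing.Theory.

(* Since gcd(M, N) = 1, two index pairs (n, k), (n', k') give the same position
   N n + M k iff they differ by a multiple of (M, -N).  Hence, when M <= Ls and
   N <= Lt, every position has exactly one representative with n < M or
   k > Lt - N; these representatives fill two disjoint boxes of sizes M (Lt + 1)
   and (Ls + 1 - M) N.  Otherwise one of the two ranges is too short for a shift
   by (M, -N), so no two index pairs collide.  As for the rank, every distinct
   position occurs in some row of P, so a selection of rows of P is the
   identity matrix. *)

Lemma mxrank_selection (F : fieldType) (T : eqType) (x0 : T) m (z : seq T)
    (f : 'I_m -> T) :
  uniq z -> {subset z <= codom f} ->
  \rank (\matrix_(i < m, c < size z) (if nth x0 z c == f i then 1 else 0)
           : 'M[F]_(m, size z))%R = size z.
Proof.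
move=> uniq_z z_codom; set P := (\matrix_(i, c) _)%R.
have /fin_all_exists [g fg] : forall c : 'I_(size z), exists i, f i = nth x0 z c.
  by move=> c; have /codomP [i ->] := z_codom _ (mem_nth x0 (ltn_ord c)); exists i.
have Pg : rowsub g P = 1%:M%R.
  apply/matrixP => c c'; rewrite !mxE fg nth_uniq // val_eqE eq_sym.
  by case: (c == c').
apply/eqP; rewrite eqn_leq rank_leq_col -{1}(mxrank1 F (size z)) -Pg rowsubE.
exact: mxrankM_maxr.
Qed.

Lemma positions_row_index M N Ls Lt :
  {subset positions M N Ls Lt <=
     codom (fun i : 'I_(Ls.+1 * Lt.+1) => N * (i %% Ls.+1) + M * (i %/ Ls.+1))}.
Proof.
move=> _ /allpairsP [[k n] [+ + ->]]; rewrite !mem_iota /= => hk hn.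
have row_lt : k * Ls.+1 + n < Ls.+1 * Lt.+1 by nia.
apply/codomP; exists (Ordinal row_lt) => /=.
by rewrite modnMDl modn_small ?divnMDl ?divn_small ?addn0 //; lia.
Qed.

Lemma mxrank_Pmat (F : fieldType) M N Ls Lt :
  \rank (Pmat F M N Ls Lt) = Rr M N Ls Lt.
Proof.
apply: mxrank_selection; first by rewrite sort_uniq undup_uniq.
by move=> x; rewrite mem_sort mem_undup => /positions_row_index.
Qed.

Section BoxPositions.

Variables M N : nat.

Definition box_positions a m b l :=
  [seq N * n + M * k | k <- iota b l, n <- iota a m].

Lemma box_positionsP x a m b l :
  reflect (exists n k, [/\ a <= n < a + m, b <= k < b + l & x = N * n + M * k])
          (x \in box_positions a m b l).
Proof.
apply: (iffP allpairsP) => [[[k n] [+ + ->]] | [n [k [hn hk ->]]]].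
  by rewrite !mem_iota => hk hn; exists n, k.
by exists (k, n); rewrite !mem_iota.
Qed.

Lemma size_box_positions a m b l : size (box_positions a m b l) = l * m.
Proof. by rewrite size_allpairs !size_iota. Qed.

Lemma box_positions_subset a m b l a' m' b' l' :
  a' <= a -> a + m <= a' + m' -> b' <= b -> b + l <= b' + l' ->
  {subset box_positions a m b l <= box_positions a' m' b' l'}.
Proof.
move=> ? ? ? ? _ /box_positionsP [n [k [hn hk ->]]].
by apply/box_positionsP; exists n, k; split=> //; lia.
Qed.

Definition reduced_positions Ls Lt :=
  box_positions 0 M 0 Lt.+1 ++ box_positions M (Ls.+1 - M) (Lt.+1 - N) N.

Hypothesis M_gt0 : 0 < M.

Lemma mem_reduced_positions Ls Lt n k :
  n <= Ls -> k <= Lt -> N * n + M * k \in reduced_positions Ls Lt.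
Proof.
elim/ltn_ind: n k => n IH k hn hk.
case: (ltnP n M) => [lt_nM | le_Mn].
  by rewrite mem_cat; apply/orP; left; apply/box_positionsP; exists n, k.
case: (leqP (k + N) Lt) => [shift_fits | shift_out].
  have -> : N * n + M * k = N * (n - M) + M * (k + N) by rewrite mulnBr; nia.
  by apply: IH; lia.
rewrite mem_cat; apply/orP; right.
by apply/box_positionsP; exists n, k; split=> //; lia.
Qed.

Lemma undup_positions_reduced {Ls Lt} : M <= Ls.+1 -> N <= Lt.+1 ->
  undup (box_positions 0 Ls.+1 0 Lt.+1) =i reduced_positions Ls Lt.
Proof.
move=> le_MLs le_NLt x; rewrite mem_undup; apply/idP/idP.
  by case/box_positionsP => n [k [hn hk ->]]; apply: mem_reduced_positions; lia.
by rewrite mem_cat => /orP [] /box_positions_subset; apply; lia.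
Qed.

Hypothesis coMN : coprime M N.

Lemma lin_comb_eq_shift {n k n' k'} :
  N * n + M * k = N * n' + M * k' -> n <= n' ->
  exists t, n' = n + M * t /\ k = k' + N * t.
Proof.
move=> E le_nn'.
have Mk : M * k = N * (n' - n) + M * k'.
  have : N * n <= N * n' by rewrite leq_mul2l le_nn' orbT.
  rewrite mulnBr; lia.
have : M %| N * (n' - n).
  by rewrite -(dvdn_addl _ (dvdn_mulr k' (dvdnn M))) -Mk dvdn_mulr.
rewrite Gauss_dvdr // => /dvdnP [t Ht].
exists t; split; first lia.
by apply/eqP; rewrite -(eqn_pmul2l M_gt0) Mk Ht; apply/eqP; nia.
Qed.

Lemma lin_comb_eq_cases {n k n' k'} :
  N * n + M * k = N * n' + M * k' ->
  [\/ n = n' /\ k = k', n + M <= n' /\ k' + N <= k | n' + M <= n /\ k + N <= k'].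
Proof.
move=> E; case: (leqP n n') => [le_nn'|lt_n'n].
  have [[|t] [-> ->]] := lin_comb_eq_shift E le_nn'; first by constructor 1; lia.
  by constructor 2; nia.
have [[|t] [-> ->]] := lin_comb_eq_shift (esym E) (ltnW lt_n'n).
  by constructor 1; lia.
by constructor 3; nia.
Qed.

Lemma box_positions_uniq a m b l :
  (m <= M) || (l <= N) -> uniq (box_positions a m b l).
Proof.
move=> /orP small; apply: allpairs_uniq; rewrite ?iota_uniq //.
move=> [k n] [k' n'] /allpairsP [[? ?] [+ + [-> ->]]]
  /allpairsP [[? ?] [+ + [-> ->]]]; rewrite !mem_iota /= => hk hn hk' hn' E.
by case: (lin_comb_eq_cases E) => [[-> ->] //| |]; case: small; lia.
Qed.

Lemma uniq_reduced_positions Ls Lt : uniq (reduced_positions Ls Lt).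
Proof.
rewrite cat_uniq !box_positions_uniq ?leqnn ?orbT //= andbT.
apply/hasPn => _ /box_positionsP [n [k [hn hk ->]]].
apply/negP => /box_positionsP [n' [k' [hn' hk' E]]].
by case: (lin_comb_eq_cases E); lia.
Qed.

Lemma size_undup_positions Ls Lt :
  size (undup (positions M N Ls Lt)) =
    (if (M < Ls.+1) && (N < Lt.+1)
     then N * Ls.+1 + M * Lt.+1 - M * N
     else Ls.+1 * Lt.+1).
Proof.
rewrite -[positions _ _ _ _]/(box_positions 0 Ls.+1 0 Lt.+1).
case: ifP => [/andP [lt_MLs lt_NLt] | /negbT large].
  have reduced := uniq_perm (undup_uniq _) (uniq_reduced_positions Ls Lt)
                    (undup_positions_reduced (ltnW lt_MLs) (ltnW lt_NLt)).
  by rewrite (perm_size reduced) size_cat !size_box_positions; nia.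
rewrite undup_id ?size_box_positions 1?mulnC // box_positions_uniq //.
by move: large; rewrite negb_and -!leqNgt.
Qed.

End BoxPositions.

Theorem theorem2 (F : fieldType) (Ls Lt M N : nat) :
  (0 < M)%N -> (0 < N)%N -> coprime M N ->
  \rank (Pmat F M N Ls Lt) = Rr M N Ls Lt /\
  Rr M N Ls Lt =
    (if (M < Ls.+1) && (N < Lt.+1)
     then N * Ls.+1 + M * Lt.+1 - M * N
     else Ls.+1 * Lt.+1)%N.
Proof.
move=> M_gt0 _ coMN; split; first exact: mxrank_Pmat.
by rewrite /Rr /zetas size_sort size_undup_positions.
Qed.
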